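(* For any non-null classifier $\delta$, any $t\ge0$, any $F$ satisfying the assumptions below, and any $\phi\in(\tfrac12,1]$, the reward $r^*=k_\mu^*(t,F)/\rho(\delta,\phi)$ is a Condorcet winner: for every other reward $r\in\mathbb{R}$, a majority of individuals (a set of measure at least one half) prefers $r^*$ to $r$, where each individual evaluates rewards by the payoff $U_i(\cdot)$ below.
   Context: A unit mass of individuals $i\in[0,1]$ have privately known costs $\gamma_i\in\mathbb{R}$ of choosing $\beta_i=1$ (compliance) rather than $\beta_i=0$, distributed according to a continuously differentiable CDF $F$ with log-concave density $f$ of full support on $\mathbb{R}$. A classifier $\delta=(\delta_1,\delta_0)\in[0,1]^2$ assigns $d_i$ with $\Pr[d_i=s_i\mid s_i]=\delta_{s_i}$, where $\Pr[s_i=\beta_i]=\phi$. Let $\rho=\rho(\delta,\phi)=(\delta_1+\delta_0-1)(2\phi-1)$; $\delta$ is non-null if $\rho\neq0$. Individuals with $d_i=1$ receive reward $r$, financed by an equal tax on all (budget balance), and each gets $t\pi$ with $\pi=F(r\rho)$ the compliance rate (individuals comply iff $\gamma_i\le r\rho$). Individual $i$'s payoff from reward $r$ is $U_i(r)=-\gamma_i+r\rho(1-F(r\rho))+tF(r\rho)$ if $\gamma_i\le r\rho$, and $U_i(r)=-r\rho F(r\rho)+tF(r\rho)$ otherwise. Define $k_0,k_1$ by $k_0=t-\frac{F(k_0)}{f(k_0)}$, $k_1=t+\frac{1-F(k_1)}{f(k_1)}$, and for an individual with cost $\gamma$ let $k^*(\gamma)=k_1$ if $\gamma\le k_0F(k_0)+k_1(1-F(k_1))+t(F(k_1)-F(k_0))$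 and $k_0$ otherwise. The median individual $\mu$ has cost $\gamma_\mu$ with $F(\gamma_\mu)=\tfrac12$, and $k_\mu^*(t,F)=k^*(\gamma_\mu)$. *)

From mathcomp Require Import all_boot all_order all_algebra.
From mathcomp Require Import all_classical all_reals all_analysis.
Set Implicit Arguments. Unset Strict Implicit. Unset Printing Implicit Defensive.
Import Order.TTheory GRing.Theory Num.Theory.
Import numFieldNormedType.Exports.
Local Open Scope ring_scope.
Local Open Scope classical_set_scope.

Section Defs.
Variable R : realType.

Definition rho (d1 d0 phi : R) : R := (d1 + d0 - 1) * (2 * phi - 1).

(* Payoff U_i(r) of an individual with cost gamma, given the CDF F,
   the (lump-sum) transfer parameter t and rho. *)
Definition payoff (F : R -> R) (t rh gamma r : R) : R :=
  if gamma <= r * rh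
  then - gamma + r * rh * (1 - F (r * rh)) + t * F (r * rh)
  else - (r * rh * F (r * rh)) + t * F (r * rh).

Definition kstar (F : R -> R) (t k0 k1 gamma : R) : R :=
  if gamma <= k0 * F k0 + k1 * (1 - F k1) + t * (F k1 - F k0) then k1 else k0.

Definition log_concave (f : R -> R) : Prop :=
  forall x y l : R, 0 <= l <= 1 ->
    l * ln (f x) + (1 - l) * ln (f y) <= ln (f (l * x + (1 - l) * y)).

Definition good_cdf (F f : R -> R) : Prop :=
  {homo F : x y / x <= y} /\
  F x @[x --> -oo] --> (0 : R) /\
  F x @[x --> +oo] --> (1 : R) /\
  (forall x : R, is_derive x (1 : R) F (f x)) /\
  continuous f /\
  (forall x, 0 < f x) /\
  log_concave f.

Definition mass_prefer (F f : R -> R) (t rh r1 r2 : R) : \bar R :=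
  (\int[@lebesgue_measure R]_(g in [set g | (payoff F t rh g r2 <= payoff F t rh g r1)%R])
      (f g)%:E)%E.

End Defs.

(* Write k = r * rho for the effective reward: an individual with cost g gets
   (t - k) F k + max (k - g) 0.  Log-concavity of f makes F / f increasing and
   (1 - F) / f decreasing, so the first-order conditions defining k0 and k1
   locate the global maxima of (t - k) F k and (t - k) F k + k; hence
   kstar g maximises the payoff of the individual with cost g.  The payoff
   advantage of kstar gmu over k is monotone in g (decreasing if k <= kstar gmu,
   increasing otherwise), so every individual on one side of the median agrees
   with the median, and that side has mass 1/2. *)

From mathcomp Require Import all_boot all_order all_algebra.
From mathcomp Require Import all_classical all_reals all_analysis.
From mathcomp Require Import ring lra measurable_realfun.
Set Implicit Arguments. Unset Strict Implicit. Unset Printing Implicit Defensive.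
Import Order.TTheory GRing.Theory Num.Theory.
Import numFieldNormedType.Exports.
Local Open Scope ring_scope.
Local Open Scope classical_set_scope.

Section DerivativeSign.
Context {R : realType}.
Variables (g dg : R -> R).
Hypothesis g_deriv : forall x : R, is_derive x (1 : R) g (dg x).

Let g_cont : continuous g.
Proof.
move=> x; apply: differentiable_continuous; apply/derivable1_diffP.
by have [] := g_deriv x.
Qed.

Let derive1_g x : g^`() x = dg x.
Proof. by rewrite derive1E derive_val. Qed.

Lemma is_derive_ndecrNy b : (forall x, x < b -> 0 <= dg x) ->
  forall x, x <= b -> g x <= g b.
Proof.
move=> dg_ge0 x xb; apply: (@ger0_derive1_ndecrNy _ _ b) => //.
- by move=> y; rewrite in_itv /= derive1_g => /dg_ge0.
- exact: continuous_subspaceT.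
Qed.

Lemma is_derive_ndecry a : (forall x, a < x -> 0 <= dg x) ->
  forall x, a <= x -> g a <= g x.
Proof.
move=> dg_ge0 x ax; apply: (@ger0_derive1_ndecry _ _ a) => //.
- by move=> y; rewrite in_itv /= andbT derive1_g => /dg_ge0.
- exact: continuous_subspaceT.
Qed.

Lemma is_derive_nincry a : (forall x, a < x -> dg x <= 0) ->
  forall x, a <= x -> g x <= g a.
Proof.
move=> dg_le0 x ax; apply: (@ler0_derive1_nincry _ _ a) => //.
- by move=> y; rewrite in_itv /= andbT derive1_g => /dg_le0.
- exact: continuous_subspaceT.
Qed.

Lemma is_derive_le_max m :
  (forall x, x < m -> 0 <= dg x) -> (forall x, m < x -> dg x <= 0) ->
  forall x, g x <= g m.
Proof.
move=> dg_ge0 dg_le0 x; have [xm|mx] := leP x m.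
- exact: is_derive_ndecrNy.
- exact/is_derive_nincry/ltW.
Qed.

End DerivativeSign.

Lemma log_concave_mul_le {R : realType} (f : R -> R) :
  (forall x, 0 < f x) -> log_concave f ->
  forall a b c e : R, a <= b -> b <= c -> b + e = a + c -> f a * f c <= f b * f e.
Proof.
move=> f_gt0 f_lc a b c e ab bc bce.
have [ac|ac] := eqVneq a c.
  subst c.
  have -> : b = a by apply/eqP; rewrite eq_le ab bc.
  by have -> : e = a by lra.
have {}ac : a < c by rewrite lt_neqAle ac (le_trans ab bc).
pose l := (c - b) / (c - a).
have l01 : 0 <= l <= 1.
  by rewrite divr_ge0 ?ler_pdivrMr /=; lra.
have l01' : 0 <= 1 - l <= 1 by lra.
have bE : l * a + (1 - l) * c = b by rewrite /l; field; lra.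
have eE : (1 - l) * a + (1 - (1 - l)) * c = e.
  have -> : e = a + c - b by lra.
  by rewrite /l; field; lra.
have := f_lc a c l l01; have := f_lc a c (1 - l) l01'.
rewrite bE eE -ler_ln ?posrE ?mulr_gt0 // !lnM ?posrE //.
lra.
Qed.

Section EffectivePayoff.
Context {R : realType}.
Implicit Types (F : R -> R) (t rh g r k : R).

Definition eff_payoff F t g k := (t - k) * F k + Num.max (k - g) 0.

Lemma payoffE F t rh g r : payoff F t rh g r = eff_payoff F t g (r * rh).
Proof.
rewrite /payoff /eff_payoff; case: ifPn => [gk|].
- by rewrite max_l ?subr_ge0 //; ring.
- by rewrite -ltNge => kg; rewrite max_r ?subr_le0 ?ltW //; ring.
Qed.

Lemma maxr0_subr_nincr (a b g g' : R) : a <= b -> g <= g' ->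
  Num.max (b - g') 0 - Num.max (a - g') 0 <= Num.max (b - g) 0 - Num.max (a - g) 0.
Proof.
move=> ab gg'.
case: (leP (b - g') 0); case: (leP (a - g') 0); case: (leP (b - g) 0); case: (leP (a - g) 0).
all: lra.
Qed.

Lemma eff_payoff_pref_left F t k ks g g' : k <= ks -> g <= g' ->
  eff_payoff F t g' k <= eff_payoff F t g' ks -> eff_payoff F t g k <= eff_payoff F t g ks.
Proof. by move=> kks gg'; have := maxr0_subr_nincr kks gg'; rewrite /eff_payoff; lra. Qed.

Lemma eff_payoff_pref_right F t k ks g g' : ks <= k -> g' <= g ->
  eff_payoff F t g' k <= eff_payoff F t g' ks -> eff_payoff F t g k <= eff_payoff F t g ks.
Proof. by move=> ksk g'g; have := maxr0_subr_nincr ksk g'g; rewrite /eff_payoff; lra. Qed.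

Lemma measurable_eff_payoff_le F t k ks :
  measurable [set g | eff_payoff F t g k <= eff_payoff F t g ks].
Proof.
rewrite -[X in measurable X]setTI; apply: measurable_fun_le => //.
all: by apply: measurable_funD => //; apply: measurable_maxr => //; exact: measurable_funB.
Qed.

End EffectivePayoff.

Section LogConcaveDensity.
Context {R : realType} (F f : R -> R).
Hypothesis F_ndecr : {homo F : x y / x <= y}.
Hypothesis F_Ny : F x @[x --> -oo] --> (0 : R).
Hypothesis F_y : F x @[x --> +oo] --> (1 : R).
Hypothesis F_deriv : forall x : R, is_derive x (1 : R) F (f x).
Hypothesis f_gt0 : forall x, 0 < f x.
Hypothesis f_lc : log_concave f.

Lemma cdf_ge0 x : 0 <= F x.
Proof.
apply: (cvgr_to_le F_Ny); near=> z; by apply: F_ndecr.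
Unshelve. all: end_near.
Qed.

Lemma cdf_le1 x : F x <= 1.
Proof.
apply: (cvgr_to_ge F_y); near=> z; by apply: F_ndecr.
Unshelve. all: end_near.
Qed.

Lemma is_derive_cdf_comb a b d x :
  is_derive x (1 : R) (fun z => a * F (z + d) - b * F z) (a * f (x + d) - b * f x).
Proof.
have shift : is_derive x (1 : R) (fun z => z + d) 1.
  by have := is_deriveD (is_derive_id x (1 : R)) (is_derive_cst d x 1); rewrite addr0.
have F_shift : is_derive x (1 : R) (F \o (fun z => z + d)) (f (x + d)).
  by rewrite -[f _]mulr1; apply: is_derive1_comp.
by apply: is_deriveB; apply: is_deriveZ.
Qed.

Lemma cdf_div_density_ndecr : {homo (fun x => F x / f x) : x y / x <= y}.
Proof.
move=> x y; rewrite le_eqVlt => /predU1P[-> // | xy].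
rewrite ler_pdivrMr // mulrAC ler_pdivlMr //.
pose d := y - x.
(* [Phi] increases on [-oo, x] by log-concavity and is at least [- f y * F z]. *)
pose Phi z := f x * F (z + d) - f y * F z.
have Phi_ndecr z : z <= x -> Phi z <= Phi x.
  apply: (is_derive_ndecrNy (is_derive_cdf_comb _ _ _)) => {}z zx.
  rewrite subr_ge0 mulrC; apply: (log_concave_mul_le f_gt0 f_lc); rewrite /d; lra.
have PhiE : Phi x = f x * F y - f y * F x by rewrite /Phi /d subrKC.
have Phi_lb : \forall z \near -oo, - Phi x / f y <= F z.
  near=> z; rewrite ler_pdivrMr //.
  have : Phi z <= Phi x by apply: Phi_ndecr.
  have : 0 <= f x * F (z + d) by rewrite mulr_ge0 ?cdf_ge0 ?ltW.
  rewrite /Phi; lra.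
suff : - Phi x / f y <= 0 by rewrite ler_pdivrMr // mul0r PhiE; nra.
exact: cvgr_to_ge F_Ny Phi_lb.
Unshelve. all: end_near.
Qed.

Lemma survival_div_density_nincr :
  {homo (fun x => (1 - F x) / f x) : x y /~ x <= y}.
Proof.
move=> y x; rewrite le_eqVlt => /predU1P[-> // | xy].
rewrite ler_pdivrMr // mulrAC ler_pdivlMr //.
pose d := y - x.
(* [Psi] increases on [y, +oo] by log-concavity and is at most
   [f y - f x * F z]. *)
pose Psi z := f y * F (z + - d) - f x * F z.
have Psi_ndecr z : y <= z -> Psi y <= Psi z.
  apply: (is_derive_ndecry (is_derive_cdf_comb _ _ _)) => {}z yz.
  rewrite subr_ge0; apply: (log_concave_mul_le f_gt0 f_lc); rewrite /d; lra.
have PsiE : Psi y = f y * F x - f x * F y.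
  by rewrite /Psi /d opprB subrKC.
have Psi_ub : \forall z \near +oo, F z <= (f y - Psi y) / f x.
  near=> z; rewrite ler_pdivlMr //.
  have : Psi y <= Psi z by apply: Psi_ndecr.
  have : f y * F (z + - d) <= f y by exact: ler_piMr (ltW (f_gt0 y)) (cdf_le1 _).
  rewrite /Psi; lra.
suff : 1 <= (f y - Psi y) / f x by rewrite ler_pdivlMr // mul1r PsiE; nra.
exact: cvgr_to_le F_y Psi_ub.
Unshelve. all: end_near.
Qed.

(* [(t - k) * F k] is the net transfer of a non-complier at effective reward
   [k]; with [s = 1] the term [s * k] adds the reward collected by a complier. *)
Lemma is_derive_transfer t s k :
  is_derive k (1 : R) (fun x => (t - x) * F x + s * x) ((t - k) * f k - F k + s).
Proof.
have t_k : is_derive k (1 : R) (fun x => t - x) (0 - 1) by apply: is_deriveB.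
have := is_deriveD (is_deriveM t_k (F_deriv k)) (is_deriveZ s (is_derive_id k 1)).
suff -> : (t - k) *: f k + F k *: (0 - 1) + s%:A = (t - k) * f k - F k + s by [].
by rewrite /GRing.scale /=; ring.
Qed.

Lemma transfer_le_foc t s ks : {homo (fun x => (F x - s) / f x) : x y / x <= y} ->
  ks = t - (F ks - s) / f ks ->
  forall k, (t - k) * F k + s * k <= (t - ks) * F ks + s * ks.
Proof.
move=> ratio_ndecr ksE; apply: (is_derive_le_max (is_derive_transfer t s)) => k kks.
all: have derE : (t - k) * f k - F k + s = f k * (t - k - (F k - s) / f k)
       by field; exact: lt0r_neq0.
- have := ratio_ndecr _ _ (ltW kks); rewrite derE pmulr_rge0 //; lra.
- have := ratio_ndecr _ _ (ltW kks); rewrite derE pmulr_rle0 //; lra.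
Qed.

Lemma transfer_le_k0 t k0 : k0 = t - F k0 / f k0 ->
  forall k, (t - k) * F k <= (t - k0) * F k0.
Proof.
move=> k0E k; have := @transfer_le_foc t 0 k0 _ _ k.
rewrite !mul0r !addr0; apply; last by rewrite subr0.
by move=> x y xy; rewrite !subr0; exact: cdf_div_density_ndecr.
Qed.

Lemma transfer_le_k1 t k1 : k1 = t + (1 - F k1) / f k1 ->
  forall k, (t - k) * F k + k <= (t - k1) * F k1 + k1.
Proof.
move=> k1E k; have := @transfer_le_foc t 1 k1 _ _ k.
rewrite [1 * k]mul1r [1 * k1]mul1r; apply.
- move=> x y /survival_div_density_nincr.
  by rewrite -[1 - F x]opprB -[1 - F y]opprB !mulNr lerN2.
- by rewrite {1}k1E; field; exact: lt0r_neq0.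
Qed.

Lemma eff_payoff_le_kstar t k0 k1 g :
  k0 = t - F k0 / f k0 -> k1 = t + (1 - F k1) / f k1 ->
  forall k, eff_payoff F t g k <= eff_payoff F t g (kstar F t k0 k1 g).
Proof.
move=> k0E k1E k; have := transfer_le_k0 k0E k; have := transfer_le_k1 k1E k.
(* The threshold in [kstar] is [(t - k1) * F k1 + k1 - (t - k0) * F k0]. *)
rewrite /eff_payoff /kstar; case: ifPn => [gT|]; last rewrite -ltNge => gT.
- by case: (leP (k1 - g) 0); case: (leP (k - g) 0); lra.
- by case: (leP (k0 - g) 0); case: (leP (k - g) 0); lra.
Qed.

Hypothesis f_cont : continuous f.

Lemma integral_density_itv a b : a < b ->
  (\int[@lebesgue_measure R]_(x in `[a, b]) (f x)%:E = (F b - F a)%:E)%E.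
Proof.
move=> ab; have F_cont : continuous F.
  move=> x; apply: differentiable_continuous; apply/derivable1_diffP.
  by have [] := F_deriv x.
rewrite EFinB; apply: continuous_FTC2 => //.
- exact: continuous_subspaceT.
- split.
  + by move=> x _; have [] := F_deriv x.
  + exact: cvg_at_right_filter (F_cont a).
  + exact: cvg_at_left_filter (F_cont b).
- by move=> x _; rewrite derive1E derive_val.
Qed.

Lemma integral_density_ge (S : set R) a b : measurable S -> `[a, b] `<=` S -> a < b ->
  ((F b - F a)%:E <= \int[@lebesgue_measure R]_(x in S) (f x)%:E)%E.
Proof.
move=> mS abS ab; rewrite -integral_density_itv //.
apply: ge0_subset_integral => //.
- by apply/measurable_EFinP; apply: measurable_funTS; exact: continuous_measurable_fun.
- by move=> x _; rewrite lee_fin ltW.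
Qed.

Lemma cdf_le_integral (S : set R) x : measurable S -> `]-oo, x] `<=` S ->
  ((F x)%:E <= \int[@lebesgue_measure R]_(z in S) (f z)%:E)%E.
Proof.
move=> mS xS; have : (F x - F z)%:E @[z --> -oo] --> (F x - 0)%:E.
  by apply: cvg_EFin; [near=> z | apply: cvgB F_Ny; exact: cvg_cst].
rewrite subr0 => /cvge_to_le; apply; near=> z.
apply: integral_density_ge => [//| y |]; last by near: z; exact: nbhs_ninfty_lt (num_real x).
by rewrite /= in_itv /= => /andP[_ yx]; apply: xS; rewrite /= in_itv /= yx.
Unshelve. all: end_near.
Qed.

Lemma survival_le_integral (S : set R) x : measurable S -> `[x, +oo[ `<=` S ->
  ((1 - F x)%:E <= \int[@lebesgue_measure R]_(z in S) (f z)%:E)%E.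
Proof.
move=> mS xS; have : (F z - F x)%:E @[z --> +oo] --> (1 - F x)%:E.
  by apply: cvg_EFin; [near=> z | apply: cvgB F_y _; exact: cvg_cst].
move=> /cvge_to_le; apply; near=> z.
apply: integral_density_ge => [//| y |]; last by near: z; exact: nbhs_pinfty_gt (num_real x).
by rewrite /= in_itv /= => /andP[xy _]; apply: xS; rewrite /= in_itv /= xy.
Unshelve. all: end_near.
Qed.

End LogConcaveDensity.

Theorem proposition7 (R : realType) (d1 d0 phi t : R) (F f : R -> R)
    (k0 k1 gmu : R) :
  0 <= d1 <= 1 -> 0 <= d0 <= 1 ->
  rho d1 d0 phi != 0 ->
  0 <= t ->
  good_cdf F f ->
  1 / 2 < phi <= 1 ->
  k0 = t - F k0 / f k0 ->
  k1 = t + (1 - F k1) / f k1 ->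
  F gmu = 1 / 2 ->
  let rstar := kstar F t k0 k1 gmu / rho d1 d0 phi in
  forall r : R, r != rstar ->
    ((1 / 2)%:E <= mass_prefer F f t (rho d1 d0 phi) rstar r)%E.
Proof.
move=> _ _ rho_neq0 _ [F_ndecr [F_Ny [F_y [F_deriv [f_cont [f_gt0 f_lc]]]]]] _.
move=> k0E k1E Fgmu rstar r _.
set rh := rho d1 d0 phi; set ks := kstar F t k0 k1 gmu; set k := r * rh.
have prefE : [set g | payoff F t rh g r <= payoff F t rh g rstar] =
             [set g | eff_payoff F t g k <= eff_payoff F t g ks].
  by apply/eq_set => g; rewrite !payoffE /rstar divfK.
have median_pref : eff_payoff F t gmu k <= eff_payoff F t gmu ks.
  exact: eff_payoff_le_kstar.
rewrite /mass_prefer prefE.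
have [kks|kks] := leP k ks.
- rewrite -Fgmu; apply: cdf_le_integral => //; first exact: measurable_eff_payoff_le.
  move=> g /=; rewrite in_itv /= => ggmu.
  exact: eff_payoff_pref_left kks ggmu median_pref.
- have -> : 1 / 2 = 1 - F gmu by rewrite Fgmu; field.
  apply: survival_le_integral => //; first exact: measurable_eff_payoff_le.
  move=> g /=; rewrite in_itv /= andbT => gmug.
  exact: eff_payoff_pref_right (ltW kks) gmug median_pref.
Qed.
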